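(* Fix constants $\gamma\in(0,1]$, $c_1>0$ and $K\ge1$. There exist constants $L_0$ and $K'$ depending only on $\gamma,c_1,K$ such that the following holds for every $L\ge L_0$. Let $d_0,\dots,d_L$ be positive integers and let $A_i(0),A_i\in\mathbb{R}^{d_i\times d_{i-1}}$ ($i\in[L]$) be matrices; write $A_{j:i}=A_j\cdots A_i$ and $A_{j:i}(0)=A_j(0)\cdots A_i(0)$ for $1\le i\le j\le L$. Suppose $\|A_{j:i}(0)\|\le KL^3$ for all $1\le i\le j\le L$, $\|A_{j:i}(0)\|\le e^{-c_1L^\gamma}$ for all $1\le i\le j\le L$ with $j-i\ge L/10$, and $\|A_i-A_i(0)\|\le e^{-0.6c_1L^\gamma}$ for all $i\in[L]$. Then $$\|A_{j:i}\|\le K'L^3\quad\forall\,1\le i\le j\le L,\qquad \|A_{j:i}\|\le K'e^{-c_1L^\gamma}\quad\forall\,1\le i\le j\le L\text{ with }j-i\ge L/4.$$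
   Context: $\|\cdot\|$ denotes the spectral norm; $[L]=\{1,\dots,L\}$. *)

From mathcomp Require Import all_boot all_order all_algebra.
From mathcomp Require Import classical_sets reals sequences exp.
Set Implicit Arguments. Unset Strict Implicit. Unset Printing Implicit Defensive.
Import GRing.Theory Num.Theory.
Local Open Scope ring_scope.
Local Open Scope classical_set_scope.

Definition vnorm2 (R : realType) (n : nat) (v : 'cV[R]_n) : R :=
  Num.sqrt (\sum_(k < n) v k 0 ^+ 2).

Definition specnorm (R : realType) (m n : nat) (M : 'M[R]_(m, n)) : R :=
  sup [set r : R | exists v : 'cV[R]_n, vnorm2 v = 1 /\ r = vnorm2 (M *m v)].

(* Matrices of a depth-L network: Amat k : 'M_(d (k+1), d k) plays the role of
   the paper's A_{k+1} (0-based index shift).  The product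
   mprod Amat s n = Amat (n-1+s) *m ... *m Amat s : 'M_(d (n+s), d s).
   Hence the paper's A_{j:i} = A_j ... A_i  equals  mprod Amat (i-1) (j-i+1). *)
Fixpoint mprod (R : realType) (d : nat -> nat)
  (Amat : forall k : nat, 'M[R]_(d k.+1, d k)) (s n : nat) : 'M[R]_(d (n + s), d s) :=
  match n return 'M[R]_(d (n + s), d s) with
  | 0 => 1%:M
  | n'.+1 => Amat (n' + s) *m mprod Amat s n'
  end.

(* The perturbed products are compared with the unperturbed ones through the
   telescoping identity
     A_{j:i} - A_{j:i}(0) = \sum_k A_{j:k+1}(0) (A_k - A_k(0)) A_{k-1:i},
   whose L terms each carry a factor delta = e^{-0.6 c1 L^gamma}.  Since
   L * KL^3 * delta is tiny, strong induction on the interval bounds every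
   perturbed product by 2KL^3, and every perturbed product over an interval of
   length at least L/10 by e^{-c1 L^gamma} + 2K^2 L^7 delta.  On an interval
   of length at least L/4 (with L >= 40), every term of the sum has a factor
   over an interval of length at least L/10: either the unperturbed left one,
   of norm at most e^{-c1 L^gamma}, or the perturbed right one.  The resulting
   delta^2 = e^{-c1 L^gamma} e^{-0.2 c1 L^gamma} absorbs all polynomial
   factors once L is large. *)

From mathcomp Require Import all_boot all_order all_algebra.
From mathcomp Require Import classical_sets reals sequences exp.
From mathcomp.algebra_tactics Require Import ring lra.
From mathcomp Require Import zify.
Set Implicit Arguments. Unset Strict Implicit. Unset Printing Implicit Defensive.
Import Order.TTheory GRing.Theory Num.Theory.
Local Open Scope ring_scope.

Lemma sumr_sqr_ge0 (R : realDomainType) n (a : 'I_n -> R) : 0 <= \sum_k a k ^+ 2.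
Proof. by apply: sumr_ge0 => k _; exact: sqr_ge0. Qed.

Lemma CauchySchwarz_sum (R : realFieldType) n (a b : 'I_n -> R) :
  (\sum_k a k * b k) ^+ 2 <= (\sum_k a k ^+ 2) * (\sum_k b k ^+ 2).
Proof.
set S := \sum_k a k * b k; set A := \sum_k a k ^+ 2; set B := \sum_k b k ^+ 2.
have A_ge0 : 0 <= A := sumr_sqr_ge0 a.
have [A0|A_neq0] := eqVneq A 0.
  have a0 k : a k = 0.
    move/eqP: A0; rewrite psumr_eq0 => [/allP /(_ k (mem_index_enum _))|i _].
      by rewrite sqrf_eq0 => /eqP.
    exact: sqr_ge0.
  rewrite /S big1 => [|k _]; last by rewrite a0 mul0r.
  by rewrite expr0n /= mulr_ge0 // sumr_sqr_ge0.
(* The quadratic t |-> \sum_k (t a_k - b_k)^2 is nonnegative at t = S / A. *)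
have expand t : \sum_k (t * a k - b k) ^+ 2 = t ^+ 2 * A - 2 * t * S + B.
  rewrite /A /S /B !mulr_sumr -sumrN -!big_split /=.
  by apply: eq_bigr => k _; ring.
have := sumr_sqr_ge0 (fun k => S / A * a k - b k).
rewrite expand.
have -> : (S / A) ^+ 2 * A - 2 * (S / A) * S + B = (A * B - S ^+ 2) / A by field.
by rewrite pmulr_lge0 ?invr_gt0 ?lt0r ?A_neq0 // subr_ge0 mulrC.
Qed.

Section EuclideanNorm.
Variable R : realType.

Lemma vnorm2_ge0 n (v : 'cV[R]_n) : 0 <= vnorm2 v.
Proof. exact: sqrtr_ge0. Qed.

Lemma vnorm2_0 n : vnorm2 (0 : 'cV[R]_n) = 0.
Proof. by rewrite /vnorm2 big1 ?sqrtr0 // => k _; rewrite mxE expr0n. Qed.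

Lemma vnorm2_sqr n (v : 'cV[R]_n) : vnorm2 v ^+ 2 = \sum_k v k 0 ^+ 2.
Proof. by rewrite sqr_sqrtr // sumr_sqr_ge0. Qed.

Lemma vnorm2_eq0 n (v : 'cV[R]_n) : (vnorm2 v == 0) = (v == 0).
Proof.
apply/idP/eqP => [|->]; last by rewrite vnorm2_0.
rewrite sqrtr_eq0 => sum_le0; apply/matrixP => i j; rewrite (ord1 j) mxE.
have : \sum_k v k 0 ^+ 2 == 0 by rewrite eq_le sum_le0 sumr_sqr_ge0.
rewrite psumr_eq0 => [/allP /(_ i (mem_index_enum _))|k _]; last exact: sqr_ge0.
by rewrite sqrf_eq0 => /eqP.
Qed.

Lemma vnorm2Z n (c : R) (v : 'cV[R]_n) : vnorm2 (c *: v) = `|c| * vnorm2 v.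
Proof.
rewrite /vnorm2 -sqrtr_sqr -sqrtrM ?sqr_ge0 // mulr_sumr.
by congr Num.sqrt; apply: eq_bigr => k _; rewrite !mxE exprMn.
Qed.

Lemma vnorm2D n (u v : 'cV[R]_n) : vnorm2 (u + v) <= vnorm2 u + vnorm2 v.
Proof.
rewrite -(ler_pXn2r (n := 2)) ?nnegrE ?addr_ge0 ?vnorm2_ge0 //.
have uv_le : \sum_k u k 0 * v k 0 <= vnorm2 u * vnorm2 v.
  apply: le_trans (ler_norm _) _.
  rewrite -(ler_pXn2r (n := 2)) ?nnegrE ?mulr_ge0 ?vnorm2_ge0 //.
  rewrite exprMn !vnorm2_sqr.
  by rewrite real_normK ?num_real // CauchySchwarz_sum.
rewrite sqrrD !vnorm2_sqr.
have -> : \sum_k (u + v) k 0 ^+ 2 =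
    \sum_k u k 0 ^+ 2 + 2 * \sum_k u k 0 * v k 0 + \sum_k v k 0 ^+ 2.
  by rewrite mulr_sumr -!big_split /=; apply: eq_bigr => k _; rewrite !mxE; ring.
by rewrite mulr2n; lra.
Qed.

Lemma vnorm2_mulmx_le_frobenius m n (M : 'M[R]_(m, n)) (v : 'cV[R]_n) :
  vnorm2 (M *m v) <= Num.sqrt (\sum_i \sum_j M i j ^+ 2) * vnorm2 v.
Proof.
have frobenius_ge0 : 0 <= \sum_i \sum_j M i j ^+ 2.
  by apply: sumr_ge0 => i _; exact: sumr_sqr_ge0.
rewrite /vnorm2 -sqrtrM // ler_sqrt ?mulr_ge0 ?sumr_sqr_ge0 // mulr_suml.
by apply: ler_sum => i _; rewrite mxE CauchySchwarz_sum.
Qed.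

End EuclideanNorm.

Section SpectralNorm.
Variable R : realType.
Local Open Scope classical_set_scope.

Let spec_set m n (M : 'M[R]_(m, n)) :=
  [set r : R | exists v : 'cV[R]_n, vnorm2 v = 1 /\ r = vnorm2 (M *m v)].

Let spec_set_ubound m n (M : 'M[R]_(m, n)) : has_ubound (spec_set M).
Proof.
exists (Num.sqrt (\sum_i \sum_j M i j ^+ 2)) => _ [v [v1 ->]].
by rewrite -[leRHS]mulr1 -v1 vnorm2_mulmx_le_frobenius.
Qed.

Lemma specnorm_ge0 m n (M : 'M[R]_(m, n)) : 0 <= specnorm M.
Proof.
rewrite /specnorm -/(spec_set M).
have [->|/set0P[r Mr]] := eqVneq (spec_set M) set0; first by rewrite sup0.
apply: le_trans (ub_le_sup (spec_set_ubound M) Mr).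
by case: Mr => v [_ ->]; exact: vnorm2_ge0.
Qed.

Lemma specnorm_mulmx_le m n (M : 'M[R]_(m, n)) (v : 'cV[R]_n) :
  vnorm2 (M *m v) <= specnorm M * vnorm2 v.
Proof.
have [v0|v_neq0] := eqVneq (vnorm2 v) 0.
  by move/eqP: v0; rewrite vnorm2_eq0 => /eqP ->; rewrite mulmx0 !vnorm2_0 mulr0.
have v_gt0 : 0 < vnorm2 v by rewrite lt0r v_neq0 vnorm2_ge0.
rewrite -ler_pdivrMr // -[X in M *m X](scalerKV v_neq0) -scalemxAr vnorm2Z.
rewrite ger0_norm ?vnorm2_ge0 // mulrAC divff // mul1r.
apply: (ub_le_sup (spec_set_ubound M)).
exists ((vnorm2 v)^-1 *: v).
by rewrite vnorm2Z ger0_norm ?invr_ge0 ?vnorm2_ge0 ?mulVf.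
Qed.

Lemma specnorm_le m n (M : 'M[R]_(m, n)) c : 0 <= c ->
  (forall v, vnorm2 (M *m v) <= c * vnorm2 v) -> specnorm M <= c.
Proof.
move=> c_ge0 Mc; rewrite /specnorm -/(spec_set M).
have [->|M_neq0] := eqVneq (spec_set M) set0; first by rewrite sup0.
by apply: ge_sup => [|_ [v [v1 ->]]]; [exact/set0P | rewrite -[leRHS]mulr1 -v1].
Qed.

Lemma specnormM m n p (M : 'M[R]_(m, n)) (N : 'M[R]_(n, p)) :
  specnorm (M *m N) <= specnorm M * specnorm N.
Proof.
apply: specnorm_le => [|v]; first by rewrite mulr_ge0 ?specnorm_ge0.
rewrite -mulmxA -mulrA; apply: le_trans (specnorm_mulmx_le _ _) _.
by rewrite ler_wpM2l ?specnorm_ge0 ?specnorm_mulmx_le.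
Qed.

Lemma specnormD m n (M N : 'M[R]_(m, n)) :
  specnorm (M + N) <= specnorm M + specnorm N.
Proof.
apply: specnorm_le => [|v]; first by rewrite addr_ge0 ?specnorm_ge0.
rewrite mulmxDl mulrDl; apply: le_trans (vnorm2D _ _) _.
by rewrite lerD ?specnorm_mulmx_le.
Qed.

Lemma specnorm_sum m n (I : Type) (r : seq I) (F : I -> 'M[R]_(m, n)) :
  specnorm (\sum_(i <- r) F i) <= \sum_(i <- r) specnorm (F i).
Proof.
elim/big_ind2: _ => [|a M b N aM bN|//].
  by apply: specnorm_le => // v; rewrite mul0mx mul0r vnorm2_0.
by apply: le_trans (specnormD M N) _; rewrite lerD.
Qed.

Lemma specnorm1_le n : specnorm (1%:M : 'M[R]_n) <= 1.
Proof. by apply: specnorm_le => // v; rewrite mul1mx mul1r. Qed.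

End SpectralNorm.

Section IntervalProduct.
Variables (R : realType) (d : nat -> nat).
Implicit Types A B : forall k, 'M[R]_(d k.+1, d k).

(* [iprod A a b] is A_{b-1} *m ... *m A_a; for b < a the value is the junk
   [pid_mx], chosen so that [iprod A a a] is the identity without a cast. *)
Fixpoint iprod A a b : 'M[R]_(d b, d a) :=
  match b with
  | 0 => pid_mx (d a)
  | b'.+1 => if (a <= b')%N then A b' *m iprod A a b' else pid_mx (d a)
  end.

Lemma iprodxx A a : iprod A a a = 1%:M.
Proof. by case: a => [|a] /=; rewrite ?ltnn pid_mx_1. Qed.

Lemma iprodS A a b : (a <= b)%N -> iprod A a b.+1 = A b *m iprod A a b.
Proof. by move=> /= ->. Qed.

Lemma mprodE A s n : mprod A s n = iprod A s (n + s).
Proof.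
elim: n => [|n IHn] /=; first by rewrite iprodxx.
by rewrite IHn leq_addl.
Qed.

Lemma specnorm_mprod A i j : (0 < i <= j)%N ->
  specnorm (mprod A i.-1 (j - i).+1) = specnorm (iprod A i.-1 j).
Proof.
by move=> ij; rewrite -[in RHS](_ : ((j - i).+1 + i.-1)%N = j) ?mprodE //; lia.
Qed.

Lemma iprodB A B a b : (a <= b)%N ->
  iprod A a b - iprod B a b =
  \sum_(a <= k < b) iprod B k.+1 b *m ((A k - B k) *m iprod A a k).
Proof.
elim: b => [|b IHb] ab.
  by move: ab; rewrite leqn0 => /eqP ->; rewrite big_geq // !iprodxx subrr.
have [<-|ab'] := eqVneq a b.+1; first by rewrite big_geq // !iprodxx subrr.
have {}ab : (a <= b)%N by rewrite -ltnS ltn_neqAle ab ab'.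
rewrite big_nat_recr // iprodxx mul1mx !iprodS //.
under eq_big_nat => k /andP[_ kb] do rewrite iprodS // -mulmxA.
by rewrite -mulmx_sumr -IHb // mulmxBl !mulmxBr /= addrC addrA subrK.
Qed.

End IntervalProduct.

Lemma ler_sum_nat_const (R : numDomainType) (n a b : nat) (F : nat -> R) (c : R) :
  0 <= c -> (b - a <= n)%N -> (forall k, (a <= k < b)%N -> F k <= c) ->
  \sum_(a <= k < b) F k <= n%:R * c.
Proof.
move=> c_ge0 ban Fc; apply: le_trans (ler_sum_nat Fc) _.
by rewrite sumr_const_nat -[c *+ _]mulr_natl ler_wpM2r // ler_nat.
Qed.

Lemma ler_pdivrn_nat (R : numFieldType) (l c n : nat) : (0 < c)%N ->
  (l%:R / c%:R <= n%:R :> R) = (l <= c * n)%N.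
Proof. by move=> c_gt0; rewrite ler_pdivrMr ?ltr0n // -natrM ler_nat mulnC. Qed.

Lemma long_interval_split (L a b k : nat) :
  (40 <= L)%N -> (L <= 4 * (b - a.+1))%N -> (a <= k < b)%N ->
  ((k.+1 < b) && (L <= 10 * (b - k.+2)))%N ||
  ((a < k) && (L <= 10 * (k - a.+1)))%N.
Proof. move=> L40 long /andP[ak kb]; apply/orP; lia. Qed.

Section Perturbation.
Variables (R : realType) (d : nat -> nat) (A A0 : forall k, 'M[R]_(d k.+1, d k)).
Variables (L : nat) (M delta eps : R).
Hypotheses (M_ge0 : 0 <= M) (delta_ge0 : 0 <= delta) (eps_ge0 : 0 <= eps).
Hypothesis iprod_A0_le :
  forall a b, (a <= b <= L)%N -> specnorm (iprod A0 a b) <= M.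
Hypothesis iprod_A0_decay : forall a b, (a < b <= L)%N ->
  (L <= 10 * (b - a.+1))%N -> specnorm (iprod A0 a b) <= eps.
Hypothesis A_near_A0 : forall k, (k < L)%N -> specnorm (A k - A0 k) <= delta.
Hypothesis drift_small : L%:R * M * delta <= 1 / 4.

Lemma specnorm_iprod_telescope a b : (a <= b <= L)%N ->
  specnorm (iprod A a b) <= specnorm (iprod A0 a b) +
    \sum_(a <= k < b) specnorm (iprod A0 k.+1 b) * delta * specnorm (iprod A a k).
Proof.
move=> /andP[ab bL].
rewrite -[iprod A a b](subrK (iprod A0 a b)) addrC.
apply: le_trans (specnormD _ _) _; rewrite lerD2l iprodB //.
apply: le_trans (specnorm_sum _ _) _; apply: ler_sum_nat => k /andP[ak kb].
rewrite -mulrA; apply: le_trans (specnormM _ _) _.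
rewrite ler_wpM2l ?specnorm_ge0 //.
apply: le_trans (specnormM _ _) _; rewrite ler_wpM2r ?specnorm_ge0 //.
by rewrite A_near_A0 // (leq_trans kb).
Qed.

Lemma specnorm_iprod_le a b : (a <= b <= L)%N -> specnorm (iprod A a b) <= 2 * M.
Proof.
elim/ltn_ind: b => b IHb /andP[ab bL].
apply: le_trans (specnorm_iprod_telescope _) _; first by rewrite ab.
have sum_le : \sum_(a <= k < b)
      specnorm (iprod A0 k.+1 b) * delta * specnorm (iprod A a k)
    <= L%:R * (M * delta * (2 * M)).
  apply: ler_sum_nat_const => [||k /andP[ak kb]]; first by rewrite !mulr_ge0.
    exact: leq_trans (leq_subr a b) bL.
  apply: ler_pM; rewrite ?mulr_ge0 ?specnorm_ge0 //.
    by rewrite ler_wpM2r // iprod_A0_le // kb bL.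
  by rewrite IHb // ak (leq_trans (ltnW kb)).
have drift_term : L%:R * (M * delta * (2 * M)) <= 2 * M * (1 / 4).
  have -> : L%:R * (M * delta * (2 * M)) = 2 * M * (L%:R * M * delta) by ring.
  by rewrite ler_wpM2l ?mulr_ge0.
have A0_le_M : specnorm (iprod A0 a b) <= M by rewrite iprod_A0_le // ab bL.
move: M_ge0; lra.
Qed.

Lemma specnorm_iprod_decay10 a b : (a < b <= L)%N -> (L <= 10 * (b - a.+1))%N ->
  specnorm (iprod A a b) <= eps + L%:R * (M * delta * (2 * M)).
Proof.
move=> /andP[ab bL] long; have ab' := ltnW ab.
apply: le_trans (specnorm_iprod_telescope _) _; first by rewrite ab'.
rewrite lerD ?iprod_A0_decay ?ab //.
apply: ler_sum_nat_const => [||k /andP[ak kb]]; first by rewrite !mulr_ge0.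
  exact: leq_trans (leq_subr a b) bL.
apply: ler_pM; rewrite ?mulr_ge0 ?specnorm_ge0 //.
  by rewrite ler_wpM2r // iprod_A0_le // kb bL.
by rewrite specnorm_iprod_le // ak (leq_trans (ltnW kb)).
Qed.

Hypothesis drift_sq_small : L%:R ^+ 2 * M ^+ 3 * delta ^+ 2 <= eps / 4.

Lemma specnorm_iprod_decay4 a b : (40 <= L)%N -> (a < b <= L)%N ->
  (L <= 4 * (b - a.+1))%N -> specnorm (iprod A a b) <= 3 * eps.
Proof.
move=> L40 /andP[ab bL] long; have ab' := ltnW ab.
apply: le_trans (specnorm_iprod_telescope _) _; first by rewrite ab'.
have Mde_ge0 : 0 <= M * delta * eps by rewrite !mulr_ge0.
have LMd_ge0 : 0 <= L%:R * M ^+ 3 * delta ^+ 2 by rewrite !mulr_ge0 ?exprn_ge0.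
set c := 3 * M * delta * eps + 2 * L%:R * M ^+ 3 * delta ^+ 2.
have term_le k : (a <= k < b)%N ->
    specnorm (iprod A0 k.+1 b) * delta * specnorm (iprod A a k) <= c.
  move=> akb; have /andP[ak kb] := akb.
  have [/andP[kb' longl]|/andP[ak' longr]] :=
    orP (long_interval_split L40 long akb).
    have : specnorm (iprod A0 k.+1 b) * delta * specnorm (iprod A a k)
        <= eps * delta * (2 * M).
      apply: ler_pM; rewrite ?mulr_ge0 ?specnorm_ge0 //.
        by rewrite ler_wpM2r // iprod_A0_decay // kb' bL.
      by rewrite specnorm_iprod_le // ak (leq_trans (ltnW kb)).
    rewrite /c; nra.
  have : specnorm (iprod A0 k.+1 b) * delta * specnorm (iprod A a k)
      <= M * delta * (eps + L%:R * (M * delta * (2 * M))).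
    apply: ler_pM; rewrite ?mulr_ge0 ?specnorm_ge0 //.
      by rewrite ler_wpM2r // iprod_A0_le // kb bL.
    by rewrite specnorm_iprod_decay10 // ak' (leq_trans (ltnW kb)).
  rewrite /c; nra.
have c_ge0 : 0 <= c by rewrite /c; lra.
have A0_le_eps : specnorm (iprod A0 a b) <= eps.
  by rewrite iprod_A0_decay ?ab ?bL //; lia.
have sum_le := ler_sum_nat_const c_ge0 (leq_trans (leq_subr a b) bL) term_le.
have drift_eps : L%:R * M * delta * eps <= 1 / 4 * eps by rewrite ler_wpM2r.
apply: le_trans (lerD A0_le_eps sum_le) _.
have -> : L%:R * c =
    3 * (L%:R * M * delta * eps) + 2 * (L%:R ^+ 2 * M ^+ 3 * delta ^+ 2).
  by rewrite /c; ring.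
move: eps_ge0 drift_sq_small; lra.
Qed.
End Perturbation.

Lemma poly_le_expR (R : realType) (m : nat) (a C y : R) : 0 < a -> 0 <= y ->
  C * m.+1`!%:R / a ^+ m.+1 <= y -> C * y ^+ m <= expR (a * y).
Proof.
move=> a_gt0 y_ge0 y_large.
apply: le_trans (expR_ge1Dxn m (mulr_ge0 (ltW a_gt0) y_ge0)).
have fact_gt0 : 0 < m.+1`!%:R :> R by rewrite ltr0n fact_gt0.
rewrite ler_pdivrMr ?exprn_gt0 // in y_large.
suff : C * y ^+ m <= (a * y) ^+ m.+1 / m.+1`!%:R by lra.
rewrite ler_pdivlMr // mulrAC exprMn [y ^+ m.+1]exprSr.
have -> : a ^+ m.+1 * (y ^+ m * y) = y * a ^+ m.+1 * y ^+ m by ring.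
by rewrite ler_wpM2r ?exprn_ge0.
Qed.

Lemma powR_dominated_by_expR (R : realType) (p : nat) (g a C : R) :
  0 < g -> 0 < a -> 0 <= C ->
  exists x0 : R, forall x, x0 <= x -> C * x ^+ p <= expR (a * powR x g).
Proof.
move=> g_gt0 a_gt0 C_ge0.
set m := Num.Def.archi_bound (p%:R / g).
have p_le : p%:R <= m%:R * g.
  rewrite -ler_pdivrMr //; apply/ltW/archi_boundP.
  by rewrite divr_ge0 // ltW.
set y0 := C * m.+1`!%:R / a ^+ m.+1.
have y0_ge0 : 0 <= y0 :=
  divr_ge0 (mulr_ge0 C_ge0 (ler0n _ _)) (exprn_ge0 _ (ltW a_gt0)).
exists (Num.max 1 (powR y0 g^-1)) => x; rewrite ge_max => /andP[x_ge1 x_large].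
have x_ge0 : 0 <= x := le_trans ler01 x_ge1.
apply: le_trans (poly_le_expR (m := m) (C := C) a_gt0 (powR_ge0 _ _) _).
  rewrite ler_wpM2l // -!powR_mulrn ?powR_ge0 // -powRrM mulrC.
  exact: ler_powR.
rewrite -/y0 -[y0]powRr1 // -(mulVf (lt0r_neq0 g_gt0)) powRrM.
by apply: ge0_ler_powR; rewrite ?nnegrE ?powR_ge0 // ltW.
Qed.

Lemma small_drift (R : realType) (K l c y : R) : 1 <= K -> 1 <= l -> 0 <= c * y ->
  4 * K ^+ 3 * l ^+ 12 <= expR (c / 5 * y) ->
  l * (K * l ^+ 3) * expR (- (3 / 5 * c * y)) <= 1 / 4 /\
  l ^+ 2 * (K * l ^+ 3) ^+ 3 * expR (- (3 / 5 * c * y)) ^+ 2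
    <= expR (- (c * y)) / 4.
Proof.
move=> K_ge1 l_ge1 cy_ge0 l_large.
set delta := expR _; set eps := expR _; set Z := expR (- (c / 5 * y)).
have K_ge0 : 0 <= K := le_trans ler01 K_ge1.
have l_ge0 : 0 <= l := le_trans ler01 l_ge1.
have KlZ : K ^+ 3 * l ^+ 12 * Z <= 1 / 4.
  by rewrite /Z expRN ler_pdivrMr ?expR_gt0 // mul1r; lra.
have delta_le : delta <= Z by rewrite ler_expR; lra.
have delta_sq : delta ^+ 2 = eps * Z by rewrite expr2 -!expRD; congr expR; field.
have Kl_ge0 : 0 <= K ^+ 3 * l ^+ 12 by rewrite mulr_ge0 ?exprn_ge0.
split.
  have -> : l * (K * l ^+ 3) * delta = K * l ^+ 4 * delta by ring.
  apply: le_trans _ KlZ; apply: ler_pM; rewrite ?mulr_ge0 ?exprn_ge0 ?expR_ge0 //.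
  by apply: ler_pM; rewrite ?exprn_ge0 // ?ler_eXnr ?ler_weXn2l.
have -> : l ^+ 2 * (K * l ^+ 3) ^+ 3 * delta ^+ 2 = K ^+ 3 * l ^+ 11 * Z * eps.
  by rewrite delta_sq; ring.
have KlZ' : K ^+ 3 * l ^+ 11 * Z <= 1 / 4.
  apply: le_trans _ KlZ.
  by rewrite ler_wpM2r ?expR_ge0 // ler_wpM2l ?exprn_ge0 // ler_weXn2l.
have : 0 <= eps := expR_ge0 _; nra.
Qed.

Theorem lemma5p3 (R : realType) (gamma c1 K : R) :
  0 < gamma -> gamma <= 1 -> 0 < c1 -> 1 <= K ->
  exists L0 K' : R,
  forall (L : nat), L0 <= L%:R ->
  forall (d : nat -> nat)
         (A0 A : forall k : nat, 'M[R]_(d k.+1, d k)),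
  (forall k, (k <= L)%N -> (0 < d k)%N) ->
  (forall i j, (1 <= i)%N -> (i <= j)%N -> (j <= L)%N ->
     specnorm (mprod A0 i.-1 (j - i).+1) <= K * L%:R ^+ 3) ->
  (forall i j, (1 <= i)%N -> (i <= j)%N -> (j <= L)%N ->
     ((j - i)%N%:R : R) >= L%:R / 10 ->
     specnorm (mprod A0 i.-1 (j - i).+1) <= expR (- (c1 * powR L%:R gamma))) ->
  (forall k, (k < L)%N ->
     specnorm (A k - A0 k) <= expR (- (3/5 * c1 * powR L%:R gamma))) ->
  (forall i j, (1 <= i)%N -> (i <= j)%N -> (j <= L)%N ->
     specnorm (mprod A i.-1 (j - i).+1) <= K' * L%:R ^+ 3) /\
  (forall i j, (1 <= i)%N -> (i <= j)%N -> (j <= L)%N ->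
     ((j - i)%N%:R : R) >= L%:R / 4 ->
     specnorm (mprod A i.-1 (j - i).+1) <= K' * expR (- (c1 * powR L%:R gamma))).
Proof.
move=> gamma_gt0 _ c1_gt0 K_ge1.
have K_ge0 : 0 <= K := le_trans ler01 K_ge1.
have [x0 large] := powR_dominated_by_expR 12 gamma_gt0
  (divr_gt0 c1_gt0 (ltr0n R 5)) (mulr_ge0 (ler0n R 4) (exprn_ge0 3 K_ge0)).
exists (Num.max 40 x0), (3 * K) => L; rewrite ge_max => /andP[L40 /large L_large].
move=> d A0 A _ A0_le A0_decay A_near.
have L40n : (40 <= L)%N by rewrite -(ler_nat R).
have L_ge1 : 1 <= L%:R :> R by rewrite ler1n (leq_trans _ L40n).
have [drift drift_sq] := small_drift K_ge1 L_ge1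
  (mulr_ge0 (ltW c1_gt0) (powR_ge0 _ _)) L_large.
have M_ge1 : 1 <= K * L%:R ^+ 3 by rewrite mulr_ege1 ?exprn_ege1.
have M_ge0 : 0 <= K * L%:R ^+ 3 := le_trans ler01 M_ge1.
have delta_ge0 := expR_ge0 (- (3 / 5 * c1 * powR L%:R gamma)).
have eps_ge0 := expR_ge0 (- (c1 * powR L%:R gamma)).
have iprod_A0_le a b :
    (a <= b <= L)%N -> specnorm (iprod A0 a b) <= K * L%:R ^+ 3.
  case/andP; rewrite leq_eqVlt => /predU1P[<- _|ab bL].
    by rewrite iprodxx (le_trans (specnorm1_le _ _)).
  by rewrite -(specnorm_mprod _ (i := a.+1)) ?ab ?A0_le.
have iprod_A0_decay a b : (a < b <= L)%N -> (L <= 10 * (b - a.+1))%N ->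
    specnorm (iprod A0 a b) <= expR (- (c1 * powR L%:R gamma)).
  case/andP=> ab bL long.
  by rewrite -(specnorm_mprod _ (i := a.+1)) ?ab ?A0_decay ?ler_pdivrn_nat.
split=> i j i_gt0 ij jL; rewrite specnorm_mprod ?i_gt0 //.
  apply: le_trans
    (specnorm_iprod_le M_ge0 delta_ge0 iprod_A0_le A_near drift _) _.
    by rewrite jL andbT (leq_trans (leq_pred i)).
  by rewrite -mulrA ler_wpM2r // ler_nat.
rewrite ler_pdivrn_nat // => long.
apply: le_trans (specnorm_iprod_decay4 M_ge0 delta_ge0 eps_ge0 iprod_A0_le
  iprod_A0_decay A_near drift drift_sq L40n _ _) _; rewrite ?prednK ?jL ?andbT //.
by rewrite ler_wpM2r ?expR_ge0 //; lra.
Qed.
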